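(* Let $N>0$, $d>0$ be real numbers with $0<N<1$ and $d^{2}\leq N^{-2}-1$. For every real $A>0$, the equation $F(z)+A=0$, where $F(z)=(1-Nz)^{2}\left(1-\frac{d^{2}}{z^{2}-1}\right)$, i.e. the quartic equation $(1-Nz)^{2}(z^{2}-1-d^{2})+A(z^{2}-1)=0$ in the complex variable $z$, has exactly two real roots and two (non-real) complex roots.
   Context: This is the (dimensionless) dispersion relation for Kelvin–Helmholtz perturbations of two thin co-flowing layers (a pure incompressible fluid and a bubbly fluid): $z=ad/(u_{20}-c)$ with $c$ the phase velocity, $d=1/(bk)$ the dimensionless wave length, $N=M/d$ with $M=(u_{20}-u_{10})/a$, and $A=h_0\rho_{20}/((H_0-h_0)\rho_{10})>0$. The equation $F(z)+A=0$ is regarded as the fourth-degree polynomial equation obtained by multiplying by $z^{2}-1$; roots are counted with multiplicity. *)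

From HB Require Import structures.
From mathcomp Require Import all_boot all_order all_algebra.
From mathcomp Require Import reals.
From mathcomp Require Import complex.
Set Implicit Arguments. Unset Strict Implicit. Unset Printing Implicit Defensive.
Import Order.TTheory GRing.Theory Num.Theory.
Local Open Scope ring_scope.

Definition KH_quartic (R : realType) (N d A : R) : {poly R} :=
  (1 - N *: 'X) ^+ 2 * ('X ^+ 2 - (1 + d ^+ 2)%:P) + A *: ('X ^+ 2 - 1).

Definition KH_quartic_C (R : realType) (N d A : R) : {poly R[i]} :=
  map_poly (real_complex R) (KH_quartic N d A).

From HB Require Import structures.
From mathcomp Require Import all_boot all_order all_algebra.
From mathcomp Require Import reals complex polyrcf.
From mathcomp Require Import ring lra.

Set Implicit Arguments.
Unset Strict Implicit.
Unset Printing Implicit Defensive.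

Import Order.TTheory GRing.Theory Num.Theory.
Local Open Scope ring_scope.

(* With e = 1 + d^2, a real zero x of the quartic satisfies
   (1 - N x)^2 (e - x^2) = A (x^2 - 1), which forces 1 < x^2 < e.  Sign changes
   at 1, 1/N and at -1/N, -1 give one zero on each side of the origin; on each
   side the zero is unique and simple, so the real zeros are exactly two simple
   ones and the complementary quadratic factor has two non-real roots. *)

Lemma horner_deriv_mulXsubC (R : comNzRingType) (q : {poly R}) (a : R) :
  (q * ('X - a%:P))^`().[a] = q.[a].
Proof. by rewrite derivM derivXsubC !hornerE subrr mulr0 add0r. Qed.

Lemma factor_simple_roots (R : idomainType) (p : {poly R}) (a b : R) :
  a != b -> root p a -> root p b -> ~~ root p^`() a -> ~~ root p^`() b ->
  exists q, [/\ p = q * ('X - a%:P) * ('X - b%:P), ~~ root q a & ~~ root q b].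
Proof.
move=> neq_ab /factor_theorem[r ->] pb.
have /factor_theorem[q ->]: root r b.
  by move: pb; rewrite rootM root_XsubC eq_sym (negbTE neq_ab) orbF.
rewrite !rootE horner_deriv_mulXsubC hornerM hornerXsubC mulf_eq0 negb_or.
case/andP=> qa _.
rewrite mulrAC horner_deriv_mulXsubC hornerM hornerXsubC mulf_eq0 negb_or.
case/andP=> qb _.
by exists q; split; rewrite ?rootE // mulrAC.
Qed.

Lemma complex_factor_no_real_root (R : rcfType) (q : {poly R}) :
  (forall x, ~~ root q x) ->
  exists2 s : seq R[i], map_poly (real_complex R) q =
      lead_coef (map_poly (real_complex R) q) *: \prod_(z <- s) ('X - z%:P)
    & size s = (size q).-1 /\ all (fun z => complex.Im z != 0) s.
Proof.
move=> q_noroot; set qC := map_poly _ q.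
have [s qCE] := closed_field_poly_normal qC.
have qC_neq0 : qC != 0.
  by rewrite map_poly_eq0; apply: contraNneq (q_noroot 0) => ->; exact: root0.
exists s => //; split.
  rewrite -(size_map_poly (real_complex R) q) -/qC qCE size_scale ?size_prod_XsubC //.
  by rewrite lead_coef_eq0.
apply/allP => z zs; apply: contraT; rewrite negbK => /eqP Imz0.
have : root qC z by rewrite qCE rootZ ?lead_coef_eq0 // root_prod_XsubC.
have -> : z = real_complex R (complex.Re z) by case: z Imz0 {zs} => /= x y ->.
by rewrite rootE horner_map fmorph_eq0 -rootE (negbTE (q_noroot _)).
Qed.

Lemma complex_factor_two_simple_real_roots (R : rcfType) (p : {poly R}) (a b : R) :
  a != b -> root p a -> root p b -> ~~ root p^`() a -> ~~ root p^`() b ->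
  (forall x, root p x -> x = a \/ x = b) ->
  exists s : seq R[i],
    [/\ size s = (size p).-1,
        map_poly (real_complex R) p =
          lead_coef (map_poly (real_complex R) p) *: \prod_(z <- s) ('X - z%:P),
        count (fun z : R[i] => complex.Im z == 0) s = 2%N
      & count (fun z : R[i] => complex.Im z != 0) s = (size p - 3)%N].
Proof.
move=> neq_ab pa pb p'a p'b p_roots.
have [q [pE qa qb]] := factor_simple_roots neq_ab pa pb p'a p'b.
have q_noroot x : ~~ root q x.
  apply/negP => qx; have /p_roots[] : root p x by rewrite pE !rootM qx.
    by move=> xa; rewrite xa (negbTE qa) in qx.
  by move=> xb; rewrite xb (negbTE qb) in qx.
have q_neq0 : q != 0 by apply: contraNneq (q_noroot 0) => ->; apply: root0.
have [s qCE [size_s s_nonreal]] := complex_factor_no_real_root q_noroot.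
have count_real : count (fun z : R[i] => complex.Im z == 0) s = 0%N.
  by apply/eqP; rewrite -leqn0 leqNgt -has_count; apply/hasPn/allP.
have count_nonreal : count (fun z : R[i] => complex.Im z != 0) s = size s.
  by apply/eqP; rewrite -all_count.
have size_p : size p = (size q).+2.
  by rewrite pE !size_Mmonic ?monicXsubC ?mulf_neq0 ?polyXsubC_eq0 // !size_XsubC !addn2.
exists [:: real_complex R a, real_complex R b & s]; split.
- by rewrite /= size_s size_p prednK // size_poly_gt0.
- rewrite pE !rmorphM /= !map_polyXsubC !lead_coef_Mmonic ?monicXsubC //.
  by rewrite {1}qCE !big_cons -!scalerAl; congr (_ *: _); ring.
- by rewrite /= eqxx count_real.
- by rewrite /= eqxx count_nonreal size_s size_p !subSS subn1.
Qed.

Lemma horner_KH_quartic (R : realType) (N d A x : R) :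
  (KH_quartic N d A).[x] = (1 - N * x) ^+ 2 * (x ^+ 2 - (1 + d ^+ 2)) + A * (x ^+ 2 - 1).
Proof. by rewrite !hornerE. Qed.

Lemma horner_deriv_KH_quartic (R : realType) (N d A x : R) :
  (KH_quartic N d A)^`().[x] =
    - 2 * N * (1 - N * x) * (x ^+ 2 - (1 + d ^+ 2)) + 2 * x * ((1 - N * x) ^+ 2 + A).
Proof.
rewrite /KH_quartic !(derivD, derivM, derivB, derivN, derivZ, derivX, derivC, expr2) /=.
by rewrite !hornerE /=; ring.
Qed.

Lemma size_KH_quartic (R : realType) (N d A : R) : N != 0 -> size (KH_quartic N d A) = 5%N.
Proof.
move=> N_neq0; have size_lin : size (1 - N *: 'X : {poly R}) = 2%N.
  by rewrite addrC size_polyDl ?size_polyN ?size_scale ?size_polyX ?size_poly1.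
have size_sq : size ((1 - N *: 'X : {poly R}) ^+ 2) = 3%N.
  by rewrite expr2 size_mul ?size_lin // -size_poly_eq0 size_lin.
have nonzero (p : {poly R}) : size p = 3%N -> p != 0.
  by move=> size_p; rewrite -size_poly_eq0 size_p.
rewrite size_polyDl size_mul ?size_sq ?size_XnsubC ?nonzero ?size_XnsubC //.
by rewrite (leq_ltn_trans (size_scale_leq _ _)) // size_XnsubC.
Qed.

Section KHZeros.

Variables (R : realType) (N e A : R).

Local Notation kh x := ((1 - N * x) ^+ 2 * (x ^+ 2 - e) + A * (x ^+ 2 - 1)).
Local Notation kh' x := (- 2 * N * (1 - N * x) * (x ^+ 2 - e) + 2 * x * ((1 - N * x) ^+ 2 + A)).

Lemma kh_lin_factor_gt0 (x : R) : 0 < N -> N ^+ 2 * e <= 1 -> x ^+ 2 < e -> 0 < 1 - N * x.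
Proof.
move=> N_gt0 Ne_le1 xe; have : (N * x) ^+ 2 < 1.
  by rewrite exprMn (lt_le_trans _ Ne_le1) // ltr_pM2l ?exprn_gt0.
nra.
Qed.

Lemma kh_zero_sqr_bounds (x : R) :
  N ^+ 2 < 1 -> 1 < e -> 0 < A -> kh x = 0 -> 1 < x ^+ 2 /\ x ^+ 2 < e.
Proof.
move=> N_lt1 e_gt1 A_gt0 kh0; split; rewrite ltNge; apply/negP => hx.
- have : 0 < (1 - N * x) ^+ 2.
    have : (N * x) ^+ 2 < 1 by rewrite exprMn; nra.
    by rewrite exprn_even_gt0 //= subr_eq0; apply: contraTneq => <-; rewrite expr1n ltxx.
  move=> sq_gt0; have : (1 - N * x) ^+ 2 * (x ^+ 2 - e) < 0 by rewrite pmulr_rlt0 //; lra.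
  have : A * (x ^+ 2 - 1) <= 0 by rewrite pmulr_rle0 //; lra.
  lra.
- have : 0 <= (1 - N * x) ^+ 2 * (x ^+ 2 - e) by apply: mulr_ge0; [exact: sqr_ge0 | lra].
  have : 0 < A * (x ^+ 2 - 1) by apply: mulr_gt0 => //; lra.
  lra.
Qed.

(* At a zero, (1 - N x)^2 (e - x^2) = A (x^2 - 1): for x > 1 the left side
   decreases and the right side increases. *)
Lemma kh_zero_pos_unique (x y : R) : 0 < N -> 1 < e -> N ^+ 2 * e <= 1 -> 0 < A ->
  kh x = 0 -> kh y = 0 -> 0 < x -> 0 < y -> x = y.
Proof.
move=> N_gt0 e_gt1 Ne_le1 A_gt0.
have N_lt1 : N ^+ 2 < 1 by nra.
wlog xy : x y / x < y.
  move=> wlog_xy khx khy x_gt0 y_gt0.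
  by have [/wlog_xy->|/wlog_xy->|] := ltgtP x y.
move=> khx khy x_gt0 y_gt0; exfalso.
have [x2_gt1 _] := kh_zero_sqr_bounds N_lt1 e_gt1 A_gt0 khx.
have [_ y2_lt_e] := kh_zero_sqr_bounds N_lt1 e_gt1 A_gt0 khy.
have Ny_lt1 := kh_lin_factor_gt0 N_gt0 Ne_le1 y2_lt_e.
have lin_lt : (1 - N * y) ^+ 2 < (1 - N * x) ^+ 2.
  rewrite -subr_gt0.
  have -> : (1 - N * x) ^+ 2 - (1 - N * y) ^+ 2 = N * (y - x) * ((1 - N * y) + (1 - N * x)).
    by ring.
  by apply: mulr_gt0; [apply: mulr_gt0|]; nra.
have quot_lt : (e - y ^+ 2) * (x ^+ 2 - 1) < (e - x ^+ 2) * (y ^+ 2 - 1).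
  rewrite -subr_gt0.
  have -> : (e - x ^+ 2) * (y ^+ 2 - 1) - (e - y ^+ 2) * (x ^+ 2 - 1) = (e - 1) * (y ^+ 2 - x ^+ 2).
    by ring.
  by apply: mulr_gt0; nra.
have : (1 - N * y) ^+ 2 * ((e - y ^+ 2) * (x ^+ 2 - 1))
     < (1 - N * x) ^+ 2 * ((e - x ^+ 2) * (y ^+ 2 - 1)).
  by apply: ltr_pM => //; [exact: sqr_ge0 | apply: mulr_ge0; lra].
have -> : (1 - N * y) ^+ 2 * ((e - y ^+ 2) * (x ^+ 2 - 1)) = A * (y ^+ 2 - 1) * (x ^+ 2 - 1).
  by rewrite mulrA; congr (_ * _); lra.
have -> : (1 - N * x) ^+ 2 * ((e - x ^+ 2) * (y ^+ 2 - 1)) = A * (x ^+ 2 - 1) * (y ^+ 2 - 1).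
  by rewrite mulrA; congr (_ * _); lra.
by rewrite mulrAC ltxx.
Qed.

(* With u = -y < v = -x, the relation (1 + N u)^2 (e - u^2) (v^2 - 1)
   = (1 + N v)^2 (e - v^2) (u^2 - 1) between two zeros factors as (v - u) B = 0
   with B > 0. *)
Lemma kh_zero_neg_unique (x y : R) : 0 < N -> 1 < e -> N ^+ 2 * e <= 1 -> 0 < A ->
  kh x = 0 -> kh y = 0 -> x < 0 -> y < 0 -> x = y.
Proof.
move=> N_gt0 e_gt1 Ne_le1 A_gt0.
have N_lt1 : N ^+ 2 < 1 by nra.
wlog xy : x y / x < y.
  move=> wlog_xy khx khy x_lt0 y_lt0.
  by have [/wlog_xy->|/wlog_xy->|] := ltgtP x y.
move=> khx khy _ y_lt0; exfalso.
have [y2_gt1 _] := kh_zero_sqr_bounds N_lt1 e_gt1 A_gt0 khy.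
have [_ x2_lt_e] := kh_zero_sqr_bounds N_lt1 e_gt1 A_gt0 khx.
move: khx khy xy y_lt0 y2_gt1 x2_lt_e; rewrite -[x]opprK -[y]opprK.
move: (- x) (- y) => v u; rewrite !mulrN !opprK !sqrrN ltrN2 oppr_lt0.
move=> khv khu uv u_gt0 u2_gt1 v2_lt_e.
have u_gt1 : 1 < u by nra.
have u2v2 : u ^+ 2 < v ^+ 2 by nra.
have core_gt0 : 0 < (e - 1) * u ^+ 2 - (e - v ^+ 2) * (u ^+ 2 - 1).
  have -> : (e - 1) * u ^+ 2 - (e - v ^+ 2) * (u ^+ 2 - 1)
          = (v ^+ 2 - u ^+ 2) * (u ^+ 2 - 1) + ((u ^+ 2 - 1) ^+ 2 + (e - 1)) by ring.
  have : 0 <= (u ^+ 2 - 1) ^+ 2 by exact: sqr_ge0.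
  have : 0 < (v ^+ 2 - u ^+ 2) * (u ^+ 2 - 1) by apply: mulr_gt0; lra.
  lra.
have B_gt0 : 0 < (1 + N * u) ^+ 2 * (e - 1) * (u + v)
               - N * (2 + N * u + N * v) * (e - v ^+ 2) * (u ^+ 2 - 1).
  have -> : (1 + N * u) ^+ 2 * (e - 1) * (u + v)
              - N * (2 + N * u + N * v) * (e - v ^+ 2) * (u ^+ 2 - 1)
          = (e - 1) * (u + v)
            + N * (2 * ((e - 1) * u ^+ 2 - (e - v ^+ 2) * (u ^+ 2 - 1)) + 2 * (e - 1) * (u * v))
            + N ^+ 2 * ((u + v) * ((e - 1) * u ^+ 2 - (e - v ^+ 2) * (u ^+ 2 - 1))) by ring.
  have : 0 < (e - 1) * (u * v) by apply: mulr_gt0; nra.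
  have : 0 < (u + v) * ((e - 1) * u ^+ 2 - (e - v ^+ 2) * (u ^+ 2 - 1)) by apply: mulr_gt0; lra.
  nra.
have : (v - u) * ((1 + N * u) ^+ 2 * (e - 1) * (u + v)
                  - N * (2 + N * u + N * v) * (e - v ^+ 2) * (u ^+ 2 - 1)) = 0.
  have kh_rel u' : (1 + N * u') ^+ 2 * (u' ^+ 2 - e) + A * (u' ^+ 2 - 1) = 0 ->
              (1 + N * u') ^+ 2 * (e - u' ^+ 2) = A * (u' ^+ 2 - 1) by lra.
  have -> : (v - u) * ((1 + N * u) ^+ 2 * (e - 1) * (u + v)
                  - N * (2 + N * u + N * v) * (e - v ^+ 2) * (u ^+ 2 - 1))
          = (1 + N * u) ^+ 2 * (e - u ^+ 2) * (v ^+ 2 - 1)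
            - (1 + N * v) ^+ 2 * (e - v ^+ 2) * (u ^+ 2 - 1) by ring.
  by rewrite (kh_rel _ khu) (kh_rel _ khv); ring.
by apply/eqP; rewrite mulf_neq0 // ?gt_eqF // subr_gt0.
Qed.

(* Eliminating A between kh and kh' leaves
   (x^2 - 1) kh' x - 2 x kh x = 2 (1 - N x) Q x, where Q x has the sign of x. *)
Lemma kh_zero_simple (x : R) : 0 < N -> 1 < e -> N ^+ 2 * e <= 1 -> 0 < A ->
  kh x = 0 -> kh' x != 0.
Proof.
move=> N_gt0 e_gt1 Ne_le1 A_gt0 khx; apply/eqP => kh'x.
have N_lt1 : N ^+ 2 < 1 by nra.
have [x2_gt1 x2_lt_e] := kh_zero_sqr_bounds N_lt1 e_gt1 A_gt0 khx.
have Nx_lt1 := kh_lin_factor_gt0 N_gt0 Ne_le1 x2_lt_e.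
have : 2 * (1 - N * x) * (N * (e - x ^+ 2) * (x ^+ 2 - 1) + x * (1 - N * x) * (e - 1)) = 0.
  have -> : 2 * (1 - N * x) * (N * (e - x ^+ 2) * (x ^+ 2 - 1) + x * (1 - N * x) * (e - 1))
          = (x ^+ 2 - 1) * kh' x - 2 * x * kh x by ring.
  by rewrite khx kh'x; ring.
have Q_neq0 : N * (e - x ^+ 2) * (x ^+ 2 - 1) + x * (1 - N * x) * (e - 1) != 0.
  have [x_gt0|x_le0] := ltP 0 x.
    by rewrite gt_eqF // addr_gt0 // !mulr_gt0 //; lra.
  have -> : N * (e - x ^+ 2) * (x ^+ 2 - 1) + x * (1 - N * x) * (e - 1)
          = - ((- x) * (e - 1) + N * ((x ^+ 2 - 1) ^+ 2 + (e - 1))) by ring.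
  have : 0 < N * ((x ^+ 2 - 1) ^+ 2 + (e - 1)).
    by rewrite mulr_gt0 // ltr_wpDl ?sqr_ge0 // subr_gt0.
  have : 0 <= - x * (e - 1) by rewrite mulr_ge0 //; lra.
  by move=> ? ?; rewrite oppr_eq0 gt_eqF //; lra.
by move/eqP; apply/negP; rewrite !mulf_neq0 // ?pnatr_eq0 // gt_eqF.
Qed.

End KHZeros.

Lemma KH_quartic_root_gt1 (R : realType) (N d A : R) :
  0 < N -> N < 1 -> 0 < d -> 0 < A -> exists2 a, 1 < a & root (KH_quartic N d A) a.
Proof.
move=> N_gt0 N_lt1 d_gt0 A_gt0; set t := N^-1.
have Nt : N * t = 1 by rewrite mulfV ?gt_eqF.
have t_gt1 : 1 < t by rewrite invf_gt1.
have [a] : {x | x \in `]1, t[ & root (KH_quartic N d A) x}.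
  apply: poly_ivtoo; first lra.
  rewrite !horner_KH_quartic Nt subrr expr0n mul0r add0r mulr1 expr1n subrr mulr0 addr0.
  have : 0 < (1 - N) ^+ 2 by rewrite exprn_gt0 // subr_gt0.
  have : 0 < d ^+ 2 by rewrite exprn_gt0.
  have : 0 < A * (t ^+ 2 - 1) by rewrite mulr_gt0 //; nra.
  by move=> ? ? ?; rewrite pmulr_llt0 // pmulr_rlt0 //; lra.
by rewrite in_itv /= => /andP[a_gt1 _] Pa; exists a.
Qed.

Lemma KH_quartic_root_ltN1 (R : realType) (N d A : R) :
  0 < N -> 0 < d -> d ^+ 2 <= N ^-2 - 1 -> 0 < A ->
  exists2 b, b < -1 & root (KH_quartic N d A) b.
Proof.
move=> N_gt0 d_gt0; rewrite -exprVn; set t := N^-1 => dt A_gt0.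
have Nt : N * t = 1 by rewrite mulfV ?gt_eqF.
have d2_gt0 : 0 < d ^+ 2 by rewrite exprn_gt0.
have t_gt0 : 0 < t by rewrite invr_gt0.
have t_gt1 : 1 < t by nra.
have [b] : {x | x \in `]-t, -1[ & root (KH_quartic N d A) x}.
  apply: poly_ivtoo; first lra.
  rewrite !horner_KH_quartic !sqrrN mulrN Nt opprK expr1n subrr mulr0 addr0.
  have : 0 < (1 + N) ^+ 2 by rewrite exprn_gt0 // addr_gt0.
  have : 0 < 2 ^+ 2 * (t ^+ 2 - (1 + d ^+ 2)) + A * (t ^+ 2 - 1).
    have : 0 < A * (t ^+ 2 - 1) by rewrite mulr_gt0 //; nra.
    have : 0 <= 2 ^+ 2 * (t ^+ 2 - (1 + d ^+ 2)) by rewrite mulr_ge0 ?sqr_ge0 //; lra.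
    lra.
  by move=> ? ?; rewrite pmulr_rlt0 // mulrN1 opprK pmulr_rlt0 //; lra.
by rewrite in_itv /= => /andP[_ b_ltN1] Pb; exists b.
Qed.

Theorem proposition1 (R : realType) (N d A : R) :
  0 < N -> N < 1 -> 0 < d -> d ^+ 2 <= N ^-2 - 1 -> 0 < A ->
  exists s : seq R[i],
    [/\ size s = 4%N,
        KH_quartic_C N d A = lead_coef (KH_quartic_C N d A) *: \prod_(z <- s) ('X - z%:P),
        count (fun z : R[i] => complex.Im z == 0) s = 2%N
      & count (fun z : R[i] => complex.Im z != 0) s = 2%N].
Proof.
move=> N_gt0 N_lt1 d_gt0 d_le A_gt0; set P := KH_quartic N d A.
have e_gt1 : 1 < 1 + d ^+ 2 by rewrite ltrDl exprn_gt0.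
have Ne_le1 : N ^+ 2 * (1 + d ^+ 2) <= 1.
  by rewrite mulrC -ler_pdivlMr ?exprn_gt0 // div1r; lra.
have N2_lt1 : N ^+ 2 < 1 by nra.
have kh_root x : root P x -> (1 - N * x) ^+ 2 * (x ^+ 2 - (1 + d ^+ 2)) + A * (x ^+ 2 - 1) = 0.
  by rewrite rootE horner_KH_quartic => /eqP.
have [a a_gt1 Pa] := KH_quartic_root_gt1 N_gt0 N_lt1 d_gt0 A_gt0.
have [b b_ltN1 Pb] := KH_quartic_root_ltN1 N_gt0 d_gt0 d_le A_gt0.
have P_simple x : root P x -> ~~ root P^`() x.
  by move/kh_root => Px; rewrite rootE horner_deriv_KH_quartic kh_zero_simple.
have P_roots x : root P x -> x = a \/ x = b.
  move=> Px; have [x2_gt1 _] := kh_zero_sqr_bounds N2_lt1 e_gt1 A_gt0 (kh_root _ Px).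
  have [x_gt0|x_le0] := ltP 0 x; [left|right].
    by apply: kh_zero_pos_unique (kh_root _ Px) (kh_root _ Pa) _ _ => //; lra.
  by apply: kh_zero_neg_unique (kh_root _ Px) (kh_root _ Pb) _ _ => //; nra.
have neq_ab : a != b by rewrite gt_eqF //; lra.
have [s [size_s PE real_s nonreal_s]] :=
  complex_factor_two_simple_real_roots neq_ab Pa Pb (P_simple _ Pa) (P_simple _ Pb) P_roots.
have size_P : size P = 5%N by apply: size_KH_quartic; rewrite gt_eqF.
by rewrite size_P in size_s nonreal_s; exists s.
Qed.
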